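(* Let $(\mathbb{Z},H^+)$ be a simple component with $N_H$ the unique element of $H^+$ such that $N_H-1\notin H^+$ and $N_H+k\in H^+$ for all $k\in\mathbb{Z}^+$. Let $a\in\mathbb{N}$ and $p,c,d\in\mathbb{N}$ with $\gcd(a,p)=\gcd(a,c)=\gcd(c,d)=1$, $pc\equiv pd\equiv1\pmod a$, $p\in H^+$, $pc>aN_H$, $d>\max\{(a-1)pc+a(N_H-1),ac\}$, and let $G^+=aH^++p\langle c,d\rangle$, so that $(\mathbb{Z},G^+)$ is a simple component. Let $N_G$ be the unique element of $G^+$ with $N_G-1\notin G^+$ and $N_G+k\in G^+$ for all $k\in\mathbb{Z}^+$. Then $N_G=(a-1)pc+a(N_H-1)+1$.
   Context: A simple component is a simple partially ordered abelian group $(\mathbb{Z},P)$ (every nonzero element of $P$ is an order-unit). $\langle c,d\rangle$ is the submonoid of $\mathbb{Z}^+$ generated by $c,d$, and $aH^++p\langle c,d\rangle=\{ah+pz: h\in H^+, z\in\langle c,d\rangle\}$. *)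

From mathcomp Require Import all_boot all_order all_algebra.
Set Implicit Arguments. Unset Strict Implicit. Unset Printing Implicit Defensive.
Import Order.TTheory GRing.Theory Num.Theory.
Local Open Scope ring_scope.

(* A partially ordered abelian group structure on Z is given by its positive
   cone P : int -> Prop (a submonoid with P /\ -P = {0}). *)
Definition positive_cone (P : int -> Prop) : Prop :=
  [/\ P 0,
      (forall x y, P x -> P y -> P (x + y)) &
      (forall x, P x -> P (- x) -> x = 0)].

Definition order_unit (P : int -> Prop) (u : int) : Prop :=
  P u /\ forall z : int, exists n : nat, P (u *+ n - z).

Definition simple_component (P : int -> Prop) : Prop :=
  positive_cone P /\ forall u, P u -> u != 0 -> order_unit P u.

Definition is_conductor (P : int -> Prop) (N : int) : Prop :=
  [/\ P N, ~ P (N - 1) & forall k : nat, P (N + k%:Z)].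

Definition gen2 (c d : nat) (z : int) : Prop :=
  exists m n : nat, z = (m * c + n * d)%N%:Z.

Definition Gcone (H : int -> Prop) (a p c d : nat) (z : int) : Prop :=
  exists h w : int, [/\ H h, gen2 c d w & z = a%:Z * h + p%:Z * w].

From mathcomp Require Import all_boot all_order all_algebra.
From mathcomp Require Import zify ring.
Set Implicit Arguments. Unset Strict Implicit. Unset Printing Implicit Defensive.
Import Order.TTheory GRing.Theory Num.Theory.
Local Open Scope ring_scope.

(* A cone with a conductor lies in Z>=0 and contains every large integer, so
   each of its nonzero elements is an order unit.  Every x >= N_G lies in G^+:
   with j = x mod a, the congruence p c = 1 (mod a) makes x - j p c a multiple
   a h, and the lower bound on x forces h >= N_H.  Conversely, if
   N_G - 1 = a h + p (m c + n d), then n = 0 because d > N_G - 1; reducing mod a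
   gives m + 1 = a K, and K = 1 forces h = N_H - 1, not in H^+, while K >= 2
   makes m p c too large because p c > a N_H. *)

Section ConesWithConductor.

Variables (P : int -> Prop) (N : int).

Lemma conductor_ge : is_conductor P N -> forall x, N <= x -> P x.
Proof.
by case=> _ _ PN x Nx; have := PN `|x - N|%N; rewrite gez0_abs ?subr_ge0 // subrKC.
Qed.

Lemma conductorP : (forall x, N <= x -> P x) -> ~ P (N - 1) -> is_conductor P N.
Proof. by move=> PN PN1; split=> [|//|k]; apply: PN; rewrite ?lexx ?lerDl. Qed.

Hypothesis Pcone : positive_cone P.

Lemma cone_mulrn x n : P x -> P (x *+ n).
Proof.
by case: Pcone => P0 PD _ Px; elim: n => [|n IH]; rewrite ?mulr0n // mulrS; apply: PD.
Qed.

Hypothesis Pcond : is_conductor P N.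

Lemma cone_ge0 x : P x -> 0 <= x.
Proof.
move=> Px; rewrite leNgt; apply/negP => x_lt0.
have Pxk := cone_mulrn `|N|.+1 Px.
have PNxk : P (- (x *+ `|N|.+1)).
  apply: (conductor_ge Pcond); rewrite -mulNrn.
  have : 1 *+ `|N|.+1 <= - x *+ `|N|.+1 by rewrite lerMn2r; lia.
  rewrite natz; lia.
case: Pcone => _ _ /(_ _ Pxk PNxk) /eqP; rewrite mulrn_eq0; lia.
Qed.

Lemma simple_of_conductor : simple_component P.
Proof.
split=> // u Pu u_neq0; split=> // z.
exists (absz (z + N)%R); apply: (conductor_ge Pcond).
have : 1 *+ absz (z + N)%R <= u *+ absz (z + N)%R.
  by rewrite lerMn2r; have := cone_ge0 Pu; lia.
rewrite natz; lia.
Qed.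

End ConesWithConductor.

Lemma modn1_int_quotient (m a : nat) :
  (m = 1 %[mod a])%N -> exists s : int, m%:Z = s * a%:Z + 1.
Proof.
move=> m1; have : (m%:Z == 1%N%:Z %[mod a%:Z])%Z by rewrite !modz_nat m1.
by rewrite eqz_mod_dvd => /dvdzP[s /eqP]; rewrite subr_eq => /eqP; exists s.
Qed.

Section GconeConductor.

Variables (H : int -> Prop) (NH : int) (a p c d : nat).
Hypotheses (Hcone : positive_cone H) (Hcond : is_conductor H NH).

Local Notation G := (Gcone H a p c d).
Local Notation NG := ((a%:Z - 1) * (p * c)%N%:Z + a%:Z * (NH - 1) + 1).

Lemma Gcone_ge (pc1 : (p * c = 1 %[mod a])%N) x : NG <= x -> G x.
Proof.
have HNH : H NH by case: Hcond.
case: (posnP a) => [a0 | ]; last rewrite -ltz_nat => a_pos.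
  move: pc1; rewrite a0 modn0 => /eqP; rewrite muln_eq1 => /andP[/eqP p1 /eqP c1].
  rewrite p1 c1 => x_ge0; exists NH, x; split => //; last by lia.
  by exists (absz x), 0%N; lia.
have [s pcE] := modn1_int_quotient pc1.
set j := absz (x %% a%:Z)%Z.
have jE : j%:Z = (x %% a%:Z)%Z by rewrite gez0_abs // modz_ge0 // lt0r_neq0.
have j_lt : j%:Z < a%:Z by rewrite jE ltz_pmod.
set h := (x %/ a%:Z)%Z - j%:Z * s.
have xE : x = a%:Z * h + p%:Z * (j * c)%N%:Z.
  have -> : p%:Z * (j * c)%N%:Z = j%:Z * (p * c)%N%:Z by rewrite !PoszM; ring.
  by rewrite {1}(divz_eq x a%:Z) -jE pcE /h; ring.
move=> x_ge; exists h, (j * c)%N%:Z; split => //; last by exists j, 0%N; lia.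
apply: (conductor_ge Hcond).
have jpc : j%:Z * (p * c)%N%:Z <= (a%:Z - 1) * (p * c)%N%:Z.
  by apply: ler_wpM2r; lia.
have : a%:Z * (NH - 1) < a%:Z * h.
  by move: x_ge; rewrite xE; rewrite !PoszM in jpc *; lia.
by rewrite ltr_pM2l //; lia.
Qed.

Lemma conductor_ge0 : 0 <= NH.
Proof. by case: Hcond => HNH _ _; apply: cone_ge0 Hcone Hcond _ HNH. Qed.

Lemma Gcone_pred_neq_c_multiple (pc1 : (p * c = 1 %[mod a])%N)
    (aNH : a%:Z * NH < (p * c)%N%:Z) h (m : nat) :
  H h -> NG - 1 <> a%:Z * h + p%:Z * (m * c)%N%:Z.
Proof.
move=> Hh E; have h_ge0 := cone_ge0 Hcone Hcond Hh.
have [s pcE] := modn1_int_quotient pc1.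
have {}E : NG - 1 = a%:Z * h + m%:Z * (p * c)%N%:Z by rewrite E !PoszM; ring.
set K := (a%:Z - 1) * s + NH - h - m%:Z * s.
have mK : m%:Z + 1 = a%:Z * K.
  have : m%:Z + 1 - a%:Z * K = a%:Z * h + m%:Z * (p * c)%N%:Z - (NG - 1).
    by rewrite pcE /K; ring.
  by rewrite -E subrr => /eqP; rewrite subr_eq0 => /eqP.
case: (posnP a) => [a0 | ]; first by move: mK; rewrite a0 mul0r; lia.
rewrite -ltz_nat => a_pos.
have K_gt0 : 0 < K by rewrite -(pmulr_rgt0 K a_pos) -mK; lia.
case: (ltrP 1 K) => [K_gt1 | K_le1].
  have m_ge : 2 * a%:Z - 1 <= m%:Z.
    have : a%:Z * 2 <= a%:Z * K by apply: ler_wpM2l; lia.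
    lia.
  have : (2 * a%:Z - 1) * (p * c)%N%:Z <= m%:Z * (p * c)%N%:Z by apply: ler_wpM2r.
  have : (p * c)%N%:Z <= a%:Z * (p * c)%N%:Z by apply: ler_peMl; lia.
  have := mulr_ge0 (ler0n _ a) h_ge0.
  lia.
have K1 : K = 1 by lia.
have ma : m%:Z = a%:Z - 1 by move: mK; rewrite K1 mulr1; lia.
have hE : NH - 1 = h.
  by apply: (mulfI (lt0r_neq0 a_pos)); move: E; rewrite ma; lia.
by case: Hcond => _ + _; rewrite hE.
Qed.

Lemma Gcone_pred_notin (pc1 : (p * c = 1 %[mod a])%N)
    (aNH : a%:Z * NH < (p * c)%N%:Z) (d_gt : NG - 1 < d%:Z) :
  ~ G (NG - 1).
Proof.
case=> h [w [Hh [m [[|n] ->]] E]].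
  by apply: (Gcone_pred_neq_c_multiple pc1 aNH Hh); rewrite E mul0n addn0.
have ah_ge0 := mulr_ge0 (ler0n _ a) (cone_ge0 Hcone Hcond Hh).
have : (0 < p * c)%N by have := mulr_ge0 (ler0n _ a) conductor_ge0; lia.
rewrite muln_gt0 => /andP[p_gt0 _].
have : (d <= p * (m * c + n.+1 * d))%N.
  by apply: leq_trans (leq_pmull _ p_gt0); rewrite mulSn; lia.
lia.
Qed.

Lemma Gcone_ge0 z : G z -> 0 <= z.
Proof.
case=> h [w [Hh [m [n ->]] ->]].
by rewrite addr_ge0 ?mulr_ge0 // (cone_ge0 Hcone Hcond Hh).
Qed.

Lemma Gcone_positive_cone : positive_cone G.
Proof.
case: Hcone => H0 HD _; split.
- by exists 0, 0; split => //; [exists 0%N, 0%N | rewrite !mulr0 addr0].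
- move=> _ _ [h1 [w1 [Hh1 [m1 [n1 ->]] ->]]] [h2 [w2 [Hh2 [m2 [n2 ->]] ->]]].
  exists (h1 + h2), (m1 * c + n1 * d + (m2 * c + n2 * d))%N%:Z; split.
  + exact: HD.
  + by exists (m1 + m2)%N, (n1 + n2)%N; rewrite mulnDl mulnDl addnACA.
  + by rewrite PoszD; ring.
- by move=> x /Gcone_ge0 x_ge0 /Gcone_ge0; lia.
Qed.

End GconeConductor.

Theorem corollary4p4 (H : int -> Prop) (NH : int) (a p c d : nat) :
  simple_component H ->
  is_conductor H NH ->
  gcdn a p = 1%N -> gcdn a c = 1%N -> gcdn c d = 1%N ->
  (p * c = 1 %[mod a])%N -> (p * d = 1 %[mod a])%N ->
  H p%:Z ->
  a%:Z * NH < (p * c)%N%:Z ->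
  (a%:Z - 1) * (p * c)%N%:Z + a%:Z * (NH - 1) < d%:Z ->
  (a * c < d)%N ->
  simple_component (Gcone H a p c d) /\
  is_conductor (Gcone H a p c d)
    ((a%:Z - 1) * (p * c)%N%:Z + a%:Z * (NH - 1) + 1).
Proof.
move=> [Hcone _] Hcond _ _ _ pc1 _ _ aNH d_gt _.
have Gcond : is_conductor (Gcone H a p c d)
    ((a%:Z - 1) * (p * c)%N%:Z + a%:Z * (NH - 1) + 1).
  apply: conductorP; first exact: Gcone_ge.
  by apply: Gcone_pred_notin; rewrite // addrK.
split=> //; apply: simple_of_conductor Gcond.
exact: Gcone_positive_cone _ _ _ _ Hcone Hcond.
Qed.
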